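(* Let $N\ge0$, let $H_0\in\mathbb{R}$ and $H_n:\mathbb{Z}^n\to\mathbb{R}$ ($1\le n\le N$) be finitely supported kernels, and let $f(x)=\sum_{n=0}^{N}H_n*x^n$. For finitely supported signals $x,\epsilon:\mathbb{Z}\to\mathbb{R}$, $$\|f(x+\epsilon)-f(x)\|_2\le\min\left(\sum_{n=0}^{N}\|H_n\|_2\sum_{k=0}^{n-1}\Big(\frac{en}{k}\Big)^k\|x\|_1^k\|\epsilon\|_1^{n-k},\ \sum_{n=0}^{N}\|H_n\|_1\sum_{k=0}^{n-1}\Big(\frac{en}{k}\Big)^k\|x\|_{2k}^k\|\epsilon\|_{2(n-k)}^{n-k}\right),$$ where $e$ is the base of the natural logarithm.
   Context: Signals are real functions on $\mathbb{Z}$. For a kernel $H:\mathbb{Z}^n\to\mathbb{R}$ ($n\ge1$) and signals $x_1,\dots,x_n$, the order-$n$ convolution is $(H*[x_1,\dots,x_n])(t)=\sum_{(\tau_1,\dots,\tau_n)\in\mathbb{Z}^n}H(\tau_1,\dots,\tau_n)\prod_{i=1}^n x_i(t-\tau_i)$, and $H*x^n$ denotes $H*[x,\dots,x]$ ($n$ copies); for $n=0$, $H_0*x^0$ is the constant signal $H_0$. For a function $A$ on $\mathbb{Z}^d$, $\|A\|_p=(\sum_{\tau}|A(\tau)|^p)^{1/p}$. Empty sums are $0$; in the $k=0$ terms, $(en/k)^k$ and $\|x\|_{2k}^k$ are interpreted as $1$. *)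

From HB Require Import structures.
From mathcomp Require Import all_boot all_order all_algebra.
From mathcomp Require Import boolp classical_sets functions cardinality fsbigop.
From mathcomp Require Import reals sequences exp.
Set Implicit Arguments. Unset Strict Implicit. Unset Printing Implicit Defensive.
Import Order.TTheory GRing.Theory Num.Theory.
Local Open Scope classical_set_scope.
Local Open Scope ring_scope.

Definition Zn (n : nat) := {ffun 'I_n -> int}.

(* Sum over the whole (possibly infinite) type of a finitely supported function
   (fsbigop: the sum over its finite support). *)
Definition fsum (R : realType) (T : choiceType) (A : T -> R) : R :=
  \sum_(t \in [set: T]) A t.

Definition lpnorm (R : realType) (T : choiceType) (p : R) (A : T -> R) : R :=
  powR (fsum (fun t => powR `|A t| p)) p^-1.

Definition convn (R : realType) (n : nat) (H : Zn n -> R) (xs : 'I_n -> int -> R)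
    (t : int) : R :=
  fsum (fun tau : Zn n => H tau * \prod_(i < n) xs i (t - tau i)).

(* H * x^n ;  for n = 0 this is the constant H (the unique point of Z^0) *)
Definition convpow (R : realType) (n : nat) (H : Zn n -> R) (x : int -> R) : int -> R :=
  convn H (fun _ => x).

Definition volterra (R : realType) (N : nat) (H : forall n : nat, Zn n -> R)
    (x : int -> R) : int -> R :=
  fun t => \sum_(n < N.+1) convpow (H n) x t.

Definition fin_supp (T : Type) (R : realType) (A : T -> R) : Prop :=
  finite_set [set t | A t != 0].

Definition term1 (R : realType) (n k : nat) (x eps : int -> R) : R :=
  (if k == 0%N then 1 else (expR 1 * n%:R / k%:R) ^+ k * lpnorm 1 x ^+ k)
  * lpnorm 1 eps ^+ (n - k).

Definition term2 (R : realType) (n k : nat) (x eps : int -> R) : R :=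
  (if k == 0%N then 1
   else (expR 1 * n%:R / k%:R) ^+ k * lpnorm (2 * k)%:R x ^+ k)
  * lpnorm (2 * (n - k))%:R eps ^+ (n - k).

Definition bound1 (R : realType) (N : nat) (H : forall n : nat, Zn n -> R)
    (x eps : int -> R) : R :=
  \sum_(n < N.+1) lpnorm 2 (H n) * \sum_(k < n) term1 n k x eps.

Definition bound2 (R : realType) (N : nat) (H : forall n : nat, Zn n -> R)
    (x eps : int -> R) : R :=
  \sum_(n < N.+1) lpnorm 1 (H n) * \sum_(k < n) term2 n k x eps.

From HB Require Import structures.
From mathcomp Require Import all_boot all_order all_algebra.
From mathcomp Require Import boolp classical_sets functions cardinality fsbigop.
From mathcomp Require Import reals sequences exp.
From mathcomp Require Import ring lra.
Import Order.TTheory GRing.Theory Num.Theory.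
Local Open Scope ring_scope.
Set Implicit Arguments. Unset Strict Implicit. Unset Printing Implicit Defensive.

(* Expanding the products multilinearly, f(x + eps) - f(x) is the sum over n and
   over the proper subsets S of {0, ..., n-1} of H_n * [x_S], where x_S feeds x to
   the slots in S and eps to the others.  Each such term is bounded in two ways:
   a Schur test (Young's inequality) gives ||H * [y]||_2 <= ||H||_2 prod_i ||y_i||_1,
   and Minkowski's inequality over the kernel gives
   ||H * [y]||_2 <= ||H||_1 sup_tau ||prod_i y_i (. - tau_i)||_2, which AM-GM and
   translation invariance bound by ||x||_{2k}^k ||eps||_{2(n-k)}^{n-k} for |S| = k.
   Grouping the 'C(n, k) <= (e n / k)^k subsets of size k yields the two bounds. *)

Section SumInequalities.
Variable R : realDomainType.

Lemma cauchy_schwarz_seq (I : Type) (r : seq I) (w a b : I -> R) :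
  (forall i, 0 <= w i) ->
  (\sum_(i <- r) w i * a i * b i) ^+ 2 <=
  (\sum_(i <- r) w i * a i ^+ 2) * (\sum_(i <- r) w i * b i ^+ 2).
Proof.
move=> w_ge0.
have lagrange : \sum_(i <- r) \sum_(j <- r) w i * w j * (a i * b j - a j * b i) ^+ 2 =
    (\sum_(i <- r) w i * a i ^+ 2) * (\sum_(i <- r) w i * b i ^+ 2) +
    (\sum_(i <- r) w i * b i ^+ 2) * (\sum_(i <- r) w i * a i ^+ 2) -
    2 * (\sum_(i <- r) w i * a i * b i) ^+ 2.
  rewrite expr2 !mulr_suml mulr_sumr -big_split -sumrB; apply: eq_bigr => i _.
  rewrite !mulr_sumr -!big_split -sumrB; apply: eq_bigr => j _ /=; ring.
have : 0 <= \sum_(i <- r) \sum_(j <- r) w i * w j * (a i * b j - a j * b i) ^+ 2.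
  by apply: sumr_ge0 => i _; apply: sumr_ge0 => j _; rewrite mulr_ge0 ?sqr_ge0 // mulr_ge0.
rewrite lagrange; nra.
Qed.

Lemma schur_test_seq (I J : Type) (ri : seq I) (rj : seq J) (w : I -> J -> R)
    (a : J -> R) (W : R) :
  0 <= W -> (forall i j, 0 <= w i j) ->
  (forall i, \sum_(j <- rj) w i j <= W) -> (forall j, \sum_(i <- ri) w i j <= W) ->
  \sum_(i <- ri) (\sum_(j <- rj) w i j * a j) ^+ 2 <= W ^+ 2 * \sum_(j <- rj) a j ^+ 2.
Proof.
move=> W_ge0 w_ge0 row col.
apply: (@le_trans _ _ (\sum_(i <- ri) (\sum_(j <- rj) w i j * a j ^+ 2) * W)).
  apply: ler_sum => i _.
  have := cauchy_schwarz_seq rj a (fun _ => 1) (w_ge0 i).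
  under eq_bigr do rewrite mulr1; under [in X in _ <= _ * X]eq_bigr do rewrite expr1n mulr1.
  move/le_trans; apply; rewrite ler_wpM2l ?row //.
  by apply: sumr_ge0 => j _; rewrite mulr_ge0 ?sqr_ge0.
rewrite -mulr_suml exchange_big /= [leLHS]mulrC expr2 -mulrA ler_wpM2l // mulr_sumr.
by apply: ler_sum => j _; rewrite -mulr_suml ler_wpM2r ?sqr_ge0 ?col.
Qed.

Lemma ler_sum_uniq (I : finType) (s : seq I) (F : I -> R) :
  uniq s -> (forall i, 0 <= F i) -> \sum_(i <- s) F i <= \sum_i F i.
Proof.
move=> us F_ge0; rewrite big_uniq //= [leLHS]big_mkcond /=.
by apply: ler_sum => i _; case: ifP.
Qed.

End SumInequalities.

Lemma minkowski_seq (R : rcfType) (I : Type) (r : seq I) (a b : I -> R) :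
  Num.sqrt (\sum_(i <- r) (a i + b i) ^+ 2) <=
  Num.sqrt (\sum_(i <- r) a i ^+ 2) + Num.sqrt (\sum_(i <- r) b i ^+ 2).
Proof.
set A := \sum_(i <- r) a i ^+ 2; set B := \sum_(i <- r) b i ^+ 2.
set C := \sum_(i <- r) a i * b i.
have A_ge0 : 0 <= A by apply: sumr_ge0 => i _; apply: sqr_ge0.
have B_ge0 : 0 <= B by apply: sumr_ge0 => i _; apply: sqr_ge0.
have -> : \sum_(i <- r) (a i + b i) ^+ 2 = A + 2 * C + B.
  by rewrite /A /B /C mulr_sumr -!big_split; apply: eq_bigr => i _ /=; ring.
have C_le : C <= Num.sqrt A * Num.sqrt B.
  rewrite -sqrtrM // (le_trans (ler_norm C)) // -sqrtr_sqr ler_sqrt ?mulr_ge0 //.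
  have := cauchy_schwarz_seq r a b (fun _ => ler01).
  by under eq_bigr do rewrite mul1r; under [in X in _ <= X]eq_bigr do rewrite mul1r;
     under [in X in _ <= _ * X]eq_bigr do rewrite mul1r.
rewrite -[leRHS]ger0_norm ?addr_ge0 ?sqrtr_ge0 // -sqrtr_sqr ler_sqrt ?sqr_ge0 //.
have := sqr_sqrtr A_ge0; have := sqr_sqrtr B_ge0; nra.
Qed.

Lemma prod_le_mean_powr (R : realFieldType) (I : finType) (A : {set I}) (a : I -> R) :
  (0 < #|A|)%N -> (forall i, 0 <= a i) ->
  \prod_(i in A) a i <= (\sum_(i in A) a i ^+ #|A|) / #|A|%:R.
Proof.
move=> A_gt0 a_ge0.
have [AGM _] := leif_AGM (A := A) (fun i _ => exprn_ge0 #|A| (a_ge0 i)).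
have mean_ge0 : 0 <= (\sum_(i in A) a i ^+ #|A|) / #|A|%:R.
  by rewrite divr_ge0 // sumr_ge0 // => i _; apply: exprn_ge0.
by rewrite -(ler_pXn2r A_gt0) ?nnegrE ?prodr_ge0 // -prodrXl.
Qed.

Lemma neq_setTEcard (T : finType) (A : {set T}) : (A != [set: T]) = (#|A| < #|T|)%N.
Proof. by rewrite -finset.properT properEcard finset.subsetT cardsT. Qed.

Lemma cardsC_ord n (S : {set 'I_n}) : (n - #|S|)%N = #|~: S|.
Proof.
apply: (@addnI #|S|); rewrite cardsC card_ord subnKC //.
by rewrite -[leqRHS]card_ord max_card.
Qed.

Section FiniteSupport.
Variable R : realType.

Definition supported_on (T : eqType) (f : T -> R) (r : seq T) :=
  forall t, f t != 0 -> t \in r.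

Lemma supported_on_eq0 (T : eqType) (f : T -> R) (r : seq T) (t : T) :
  supported_on f r -> t \notin r -> f t = 0.
Proof. by move=> fr; apply: contraNeq => /fr. Qed.

Lemma fin_suppP (T : choiceType) (f : T -> R) :
  fin_supp f <-> exists2 r : seq T, uniq r & supported_on f r.
Proof.
split=> [fs|[r _ fr]]; last by apply: (sub_finite_set _ (finite_seq r)) => t /fr.
exists (finmap.enum_fset (fset_set [set t | f t != 0])); first exact: finmap.fset_uniq.
by move=> t ft; rewrite in_fset_set //; apply: mem_set.
Qed.

Lemma fin_supp_family (T : choiceType) (I : finType) (F : I -> T -> R) :
  (forall i, fin_supp (F i)) -> exists2 r : seq T, uniq r & forall i, supported_on (F i) r.
Proof.
move=> fF; have [rs rsP] : {rs : I -> seq T & forall i, supported_on (F i) (rs i)}.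
  apply: (@choice _ _ (fun i r => supported_on (F i) r)) => i.
  by have /fin_suppP[r _ Fr] := fF i; exists r.
exists (undup (flatten [seq rs i | i <- enum I])) => [|i t /(rsP i) tr].
  exact: undup_uniq.
by rewrite mem_undup; apply/flatten_mapP; exists i; rewrite ?mem_enum.
Qed.

Lemma fin_supp_common (T : choiceType) (f g : T -> R) : fin_supp f -> fin_supp g ->
  exists2 r : seq T, uniq r & supported_on f r /\ supported_on g r.
Proof.
move=> ff fg; have fb (b : bool) : fin_supp (if b then f else g) by case: b.
have [r ur r_fg] := fin_supp_family fb.
by exists r => //; split; [apply: (r_fg true) | apply: (r_fg false)].
Qed.

Lemma fin_suppD (T : choiceType) (f g : T -> R) :
  fin_supp f -> fin_supp g -> fin_supp (fun t => f t + g t).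
Proof.
move=> ff fg; have [r ur [fr gr]] := fin_supp_common ff fg.
apply/fin_suppP; exists r => // t; apply: contraNT => tr.
by rewrite (supported_on_eq0 fr tr) (supported_on_eq0 gr tr) addr0.
Qed.

Lemma fin_suppZ (T : choiceType) (c : R) (f : T -> R) :
  fin_supp f -> fin_supp (fun t => c * f t).
Proof.
move=> /fin_suppP[r ur fr]; apply/fin_suppP; exists r => // t.
by rewrite mulf_eq0 negb_or => /andP[_ /fr].
Qed.

Lemma fin_supp_norm (T : choiceType) (f : T -> R) : fin_supp f -> fin_supp (fun t => `|f t|).
Proof.
by move=> /fin_suppP[r ur fr]; apply/fin_suppP; exists r => // t; rewrite normr_eq0 => /fr.
Qed.

Lemma fin_supp_sum (T : choiceType) (I : Type) (r : seq I) (P : pred I)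
    (F : I -> T -> R) :
  (forall i, P i -> fin_supp (F i)) -> fin_supp (fun t => \sum_(i <- r | P i) F i t).
Proof.
move=> fF; elim: r => [|i r IHr].
  by apply/fin_suppP; exists [::] => // t; rewrite big_nil eqxx.
case Pi: (P i); under eq_fun do rewrite big_cons Pi; last exact: IHr.
exact: fin_suppD (fF i Pi) IHr.
Qed.

Lemma fsum_seqE (T : choiceType) (r : seq T) (F : T -> R) :
  uniq r -> supported_on F r -> fsum F = \sum_(t <- r) F t.
Proof.
move=> ur Fr; rewrite /fsum (fsbigE r) //.
- by apply: eq_bigl => t; rewrite in_setT.
- by move=> t _ /(supported_on_eq0 Fr).
Qed.

Lemma fsum_ge0 (T : choiceType) (F : T -> R) : (forall t, 0 <= F t) -> 0 <= fsum F.
Proof. by move=> F_ge0; apply: fsumr_ge0 => t _. Qed.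

Lemma ler_sum_fsum (T : choiceType) (r : seq T) (F : T -> R) :
  uniq r -> (forall t, 0 <= F t) -> fin_supp F -> \sum_(t <- r) F t <= fsum F.
Proof.
move=> ur F_ge0 /fin_suppP[s us Fs].
pose q := r ++ [seq t <- s | t \notin r].
have uq : uniq q.
  rewrite cat_uniq ur filter_uniq //= andbT; apply/hasPn => t.
  by rewrite mem_filter => /andP[].
rewrite (fsum_seqE uq) ?big_cat ?lerDl ?sumr_ge0 // => t Ft.
by rewrite mem_cat mem_filter Fs // andbT; case: (t \in r).
Qed.

Definition norm2 (T : choiceType) (f : T -> R) : R := Num.sqrt (fsum (fun t => f t ^+ 2)).

Lemma norm2_ge0 (T : choiceType) (f : T -> R) : 0 <= norm2 f.
Proof. exact: sqrtr_ge0. Qed.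

Lemma norm2_seqE (T : choiceType) (r : seq T) (f : T -> R) :
  uniq r -> supported_on f r -> norm2 f = Num.sqrt (\sum_(t <- r) f t ^+ 2).
Proof. by move=> ur fr; rewrite /norm2 (fsum_seqE ur) // => t; rewrite sqrf_eq0 => /fr. Qed.

Lemma norm2Z (T : choiceType) (c : R) (f : T -> R) :
  norm2 (fun t => c * f t) = `|c| * norm2 f.
Proof.
rewrite /norm2 -sqrtr_sqr -sqrtrM ?sqr_ge0 // /fsum mulr_fsumr.
by congr Num.sqrt; apply: eq_fsbigr => t _; rewrite exprMn.
Qed.

Lemma norm2D (T : choiceType) (f g : T -> R) : fin_supp f -> fin_supp g ->
  norm2 (fun t => f t + g t) <= norm2 f + norm2 g.
Proof.
move=> ff fg; have [r ur [fr gr]] := fin_supp_common ff fg.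
have fgr : supported_on (fun t => f t + g t) r.
  move=> t; apply: contraNT => tr.
  by rewrite (supported_on_eq0 fr tr) (supported_on_eq0 gr tr) addr0.
by rewrite !(norm2_seqE ur) // minkowski_seq.
Qed.

Lemma norm2_sum (T : choiceType) (I : Type) (r : seq I) (P : pred I) (F : I -> T -> R) :
  (forall i, P i -> fin_supp (F i)) ->
  norm2 (fun t => \sum_(i <- r | P i) F i t) <= \sum_(i <- r | P i) norm2 (F i).
Proof.
move=> fF; elim: r => [|i r IHr].
  by rewrite big_nil (norm2_seqE (r := [::])) ?big_nil ?sqrtr0 // => t; rewrite big_nil eqxx.
rewrite big_cons; case Pi: (P i); under eq_fun do rewrite big_cons Pi; last exact: IHr.
exact: le_trans (norm2D (fF i Pi) (fin_supp_sum r fF)) (lerD (lexx _) IHr).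
Qed.

Lemma norm2M_le (T : choiceType) (f g : T -> R) : fin_supp f -> fin_supp g ->
  norm2 (fun t => f t * g t) <= norm2 f * norm2 g.
Proof.
move=> ff fg; have [r ur [fr gr]] := fin_supp_common ff fg.
have fgr : supported_on (fun t => f t * g t) r.
  by move=> t; rewrite mulf_eq0 negb_or => /andP[/fr].
have sum_ge0 (h : T -> R) : 0 <= \sum_(t <- r) h t ^+ 2 by apply: sumr_ge0 => t _; apply: sqr_ge0.
rewrite !(norm2_seqE ur) // -sqrtrM // ler_sqrt ?mulr_ge0 // mulr_suml.
rewrite [leLHS]big_seq [leRHS]big_seq; apply: ler_sum => t tr; rewrite exprMn ler_wpM2l ?sqr_ge0 //.
by rewrite (big_rem t tr) lerDl sumr_ge0 // => s _; apply: sqr_ge0.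
Qed.

Lemma lpnorm_ge0 (T : choiceType) (p : R) (f : T -> R) : 0 <= lpnorm p f.
Proof. exact: powR_ge0. Qed.

Lemma lpnorm1E (T : choiceType) (f : T -> R) : lpnorm 1 f = fsum (fun t => `|f t|).
Proof.
rewrite /lpnorm invr1 powRr1; last by apply: fsum_ge0 => t; apply: powR_ge0.
by congr fsum; apply: funext => t; rewrite powRr1.
Qed.

Lemma lpnorm_natXE (T : choiceType) (k : nat) (f : T -> R) : (0 < k)%N ->
  lpnorm (2 * k)%:R f ^+ k = Num.sqrt (fsum (fun t => f t ^+ (2 * k))).
Proof.
move=> k_gt0; rewrite /lpnorm -powR_mulrn ?powR_ge0 // -powRrM.
have -> : ((2 * k)%:R^-1 * k%:R : R) = 2^-1.
  by rewrite natrM invfM -mulrA mulVf ?mulr1 // pnatr_eq0 -lt0n.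
rewrite powR12_sqrt; last by apply: fsum_ge0 => t; apply: powR_ge0.
congr (Num.sqrt (fsum _)); apply: funext => t.
by rewrite powR_mulrn // !exprM real_normK ?num_real.
Qed.

Lemma lpnorm2E (T : choiceType) (f : T -> R) : lpnorm 2 f = norm2 f.
Proof. by rewrite -[lpnorm _ _]expr1 (lpnorm_natXE f (k := 1)). Qed.

End FiniteSupport.

Section Binomial.
Variable R : realType.

Lemma natrX_le_expR_fact (k : nat) : (k%:R : R) ^+ k <= expR 1 ^+ k * k`!%:R.
Proof.
case: k => [|k]; first by rewrite !expr0 mul1r.
have := expR_ge1Dxn k (ler0n R k.+1).
rewrite -[X in expR X]mulr1 expRM_natl -ler_pdivrMr ?ltr0n ?fact_gt0 //.
by apply: le_trans; rewrite lerDr.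
Qed.

Lemma bin_le_expR (n k : nat) : (0 < k)%N ->
  ('C(n, k)%:R : R) <= (expR 1 * n%:R / k%:R) ^+ k.
Proof.
move=> k_gt0.
have bin_fact_le : ('C(n, k)%:R : R) * k`!%:R <= n%:R ^+ k.
  rewrite -natrM bin_ffact -natrX ler_nat ffact_prod.
  by rewrite -[X in (_ <= _ ^ X)%N]card_ord -prod_nat_const leq_prod // => i _; apply: leq_subr.
rewrite expr_div_n exprMn ler_pdivlMr ?exprn_gt0 ?ltr0n //.
apply: le_trans (ler_wpM2l (ler0n _ _) (natrX_le_expR_fact k)) _.
by rewrite mulrCA ler_wpM2l ?exprn_ge0 ?expR_ge0.
Qed.

Lemma bin_mul_exp_le (n k : nat) (a b : R) : 0 <= a -> 0 <= b ->
  'C(n, k)%:R * (a ^+ k * b) <=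
  (if k == 0%N then 1 else (expR 1 * n%:R / k%:R) ^+ k * a ^+ k) * b.
Proof.
move=> a_ge0 b_ge0; case: eqP => [->|/eqP k_neq0]; first by rewrite bin0 expr0 !mul1r.
by rewrite mulrA ler_wpM2r // ler_wpM2r ?exprn_ge0 // bin_le_expR // lt0n.
Qed.

Lemma sum_proper_subsets_card (n : nat) (G : nat -> R) :
  \sum_(S : {set 'I_n} | S != [set: 'I_n]) G #|S| = \sum_(k < n) 'C(n, k)%:R * G k.
Proof.
have properE (S : {set 'I_n}) : (S != [set: 'I_n]) = (#|S| < n)%N.
  by rewrite neq_setTEcard card_ord.
have card_le (S : {set 'I_n}) : (#|S| <= n)%N by rewrite -[leqRHS]card_ord max_card.
rewrite (partition_big (fun S : {set 'I_n} => inord #|S| : 'I_n.+1) (fun k => k < n)%N) /=;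
  last by move=> S; rewrite properE => S_lt; rewrite inordK // ltnS card_le.
rewrite (big_ord_widen n.+1 (fun k => 'C(n, k)%:R * G k)) //; apply: eq_bigr => k k_lt.
rewrite (eq_bigl (fun S : {set 'I_n} => S \in [set A : {set 'I_n} | #|A| == k])); last first.
  move=> S; rewrite inE properE -val_eqE /= inordK ?ltnS ?card_le //.
  by case: eqP => [->|]; rewrite ?k_lt ?andbF.
rewrite (eq_bigr (fun _ => G k)) => [|S]; last by rewrite inE => /eqP->.
by rewrite sumr_const card_draws card_ord mulr_natl.
Qed.

End Binomial.

Section Convolution.
Variable R : realType.

Lemma fin_supp_prod_shift (I : finType) (A : {pred I}) (y : I -> int -> R)
    (tau : I -> int) (i0 : I) :
  i0 \in A -> fin_supp (y i0) -> fin_supp (fun t => \prod_(i in A) y i (t - tau i)).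
Proof.
move=> i0A /fin_suppP[r _ yr]; apply/fin_suppP.
exists (undup [seq tau i0 + u | u <- r]) => [|t]; first exact: undup_uniq.
rewrite (bigD1 i0) //= mulf_eq0 negb_or => /andP[/yr u_r _].
by rewrite mem_undup; apply/mapP; exists (t - tau i0); rewrite // addrC subrK.
Qed.

Definition shifted_prod (n : nat) (y : 'I_n -> int -> R) (tau : Zn n) (t : int) : R :=
  \prod_(i < n) y i (t - tau i).

Lemma convn_seqE (n : nat) (H : Zn n -> R) (y : 'I_n -> int -> R) (sH : seq (Zn n))
    (t : int) :
  uniq sH -> supported_on H sH ->
  convn H y t = \sum_(tau <- sH) H tau * shifted_prod y tau t.
Proof.
move=> usH HsH; apply: fsum_seqE => // tau.
by rewrite mulf_eq0 negb_or => /andP[/HsH].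
Qed.

Lemma fin_supp_convn (n : nat) (H : Zn n -> R) (y : 'I_n -> int -> R) (i0 : 'I_n) :
  fin_supp H -> fin_supp (y i0) -> fin_supp (convn H y).
Proof.
move=> /fin_suppP[sH usH HsH] fy.
rewrite (funext (fun t => convn_seqE y t usH HsH)).
apply: fin_supp_sum => tau _; apply/fin_suppZ.
exact: (fin_supp_prod_shift (A := predT)) fy.
Qed.

Lemma norm2_convn_le_norm1_kernel (n : nat) (H : Zn n -> R) (y : 'I_n -> int -> R)
    (i0 : 'I_n) (B : R) :
  fin_supp H -> fin_supp (y i0) -> (forall tau, norm2 (shifted_prod y tau) <= B) ->
  norm2 (convn H y) <= lpnorm 1 H * B.
Proof.
move=> /fin_suppP[sH usH HsH] fy B_ge.
rewrite lpnorm1E (fsum_seqE usH) ?mulr_suml => [|tau]; last by rewrite normr_eq0 => /HsH.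
rewrite (funext (fun t => convn_seqE y t usH HsH)).
have fprod tau : fin_supp (shifted_prod y tau) := fin_supp_prod_shift (A := predT) tau isT fy.
apply: le_trans (norm2_sum (P := xpredT) sH (fun tau _ => fin_suppZ (H tau) (fprod tau))) _.
by apply: ler_sum => tau _; rewrite norm2Z ler_wpM2l ?B_ge.
Qed.

Lemma sum_prod_le_prod_fsum (T : choiceType) (n : nat) (F : 'I_n -> T -> R)
    (s : seq {ffun 'I_n -> T}) :
  uniq s -> (forall i t, 0 <= F i t) -> (forall i, fin_supp (F i)) ->
  \sum_(u <- s) \prod_(i < n) F i (u i) <= \prod_(i < n) fsum (F i).
Proof.
move=> us F_ge0 /fin_supp_family[r ur Fr].
(* u is coded by the positions of its coordinates in r; the extra index size r
   collects the coordinates outside r, where F vanishes. *)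
pose z i (j : 'I_(size r).+1) := if nth None (map Some r) j is Some t then F i t else 0.
pose code (u : {ffun 'I_n -> T}) : {ffun 'I_n -> 'I_(size r).+1} :=
  [ffun i => inord (index (u i) r)].
have codeE u i : z i (code u i) = F i (u i).
  rewrite /z ffunE inordK ?ltnS ?index_size //.
  have [u_r|u_r] := boolP (u i \in r); first by rewrite (nth_map (u i)) ?index_mem ?nth_index.
  by rewrite nth_default ?size_map ?memNindex ?(supported_on_eq0 (Fr i)).
have fsumE i : fsum (F i) = \sum_(j < (size r).+1) z i j.
  rewrite (fsum_seqE ur (Fr i)) big_ord_recr /= {2}/z nth_default ?size_map // addr0.
  rewrite -[in LHS](big_map Some xpredT (fun o => if o is Some t then F i t else 0)).
  by rewrite (big_nth None) big_mkord size_map.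
have z_ge0 i j : 0 <= z i j by rewrite /z; case: nth => [t|]; rewrite ?F_ge0.
have code_inj :
    {in [seq u : {ffun 'I_n -> T} <- s | \prod_(i < n) F i (u i) != 0] &, injective code}.
  have in_r u i : \prod_(i < n) F i (u i) != 0 -> u i \in r.
    by apply: contraNT => u_r; rewrite (bigD1 i) //= (supported_on_eq0 (Fr i) u_r) mul0r.
  move=> u u'; rewrite !mem_filter => /andP[/in_r Fu _] /andP[/in_r Fu' _] /ffunP eq_code.
  apply/ffunP => i; have := congr1 val (eq_code i).
  rewrite !ffunE /= !inordK ?ltnS ?index_size //.
  move/(congr1 (nth (u i) r)); rewrite nth_index // (set_nth_default (u' i)) ?index_mem //.
  by rewrite nth_index.
rewrite (eq_bigr _ (fun i _ => fsumE i)) bigA_distr_bigA /=.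
rewrite (bigID (fun u : {ffun 'I_n -> T} => \prod_(i < n) F i (u i) != 0)) /=.
rewrite [X in _ + X]big1 ?addr0 => [|u /negbNE/eqP //].
rewrite -big_filter (eq_bigr (fun u => \prod_(i < n) z i (code u i))); last first.
  by move=> u _; apply: eq_bigr => i _; rewrite codeE.
rewrite -(big_map code xpredT (fun f => \prod_(i < n) z i (f i))).
apply: ler_sum_uniq => [|f]; first by rewrite map_inj_in_uniq ?filter_uniq.
by apply: prodr_ge0 => i _.
Qed.

Lemma norm2_convn_le_norm2_kernel (n : nat) (H : Zn n -> R) (y : 'I_n -> int -> R) :
  (0 < n)%N -> fin_supp H -> (forall i, fin_supp (y i)) ->
  norm2 (convn H y) <= norm2 H * \prod_(i < n) lpnorm 1 (y i).
Proof.
move=> n_gt0 fH fy; pose i0 := Ordinal n_gt0.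
have /fin_suppP[sH usH HsH] := fH.
have /fin_suppP[sc usc conv_sc] := fin_supp_convn fH (fy i0).
set W := \prod_(i < n) lpnorm 1 (y i).
have W_ge0 : 0 <= W by apply: prodr_ge0 => i _; apply: lpnorm_ge0.
(* Schur test for the matrix w: its row sums (over tau) and column sums (over t)
   both sum prod_i |y i| over injective images, so are at most W; injectivity in
   t is where 0 < n is needed. *)
pose w t (tau : Zn n) := \prod_(i < n) `|y i (t - tau i)|.
have w_ge0 t tau : 0 <= w t tau by apply: prodr_ge0.
have sum_w_le (I : eqType) (s : seq I) (v : I -> Zn n) : uniq s -> injective v ->
    \sum_(j <- s) \prod_(i < n) `|y i (v j i)| <= W.
  move=> us v_inj; rewrite -(big_map v xpredT (fun u => \prod_(i < n) `|y i (u i)|)) /W.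
  under [X in _ <= X]eq_bigr do rewrite lpnorm1E.
  apply: sum_prod_le_prod_fsum => [|i t|i]; rewrite ?map_inj_uniq //.
  exact: fin_supp_norm.
have row t : \sum_(tau <- sH) w t tau <= W.
  have /(_ usH) := sum_w_le _ sH (fun tau => [ffun i => t - tau i]).
  under eq_bigr do under eq_bigr do rewrite ffunE; apply.
  move=> tau tau' /ffunP eq_tau; apply/ffunP => i.
  by have := eq_tau i; rewrite !ffunE => /addrI/oppr_inj.
have col tau : \sum_(t <- sc) w t tau <= W.
  have /(_ usc) := sum_w_le _ sc (fun t => [ffun i => t - tau i]).
  under eq_bigr do under eq_bigr do rewrite ffunE; apply.
  by move=> t t' /ffunP/(_ i0); rewrite !ffunE => /addIr.
have conv_le t : convn H y t ^+ 2 <= (\sum_(tau <- sH) w t tau * `|H tau|) ^+ 2.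
  rewrite -real_normK ?num_real // lerXn2r ?nnegrE ?sumr_ge0 // => [tau _|].
    by rewrite mulr_ge0.
  rewrite (convn_seqE y t usH HsH); apply: le_trans (ler_norm_sum _ _ _) _.
  by apply: ler_sum => tau _; rewrite normrM normr_prod mulrC.
rewrite (norm2_seqE usc conv_sc) (norm2_seqE usH HsH) -[W]ger0_norm // -sqrtr_sqr.
rewrite -sqrtrM ?sumr_ge0 // => [|tau _]; last exact: sqr_ge0.
rewrite mulrC ler_sqrt ?mulr_ge0 ?sqr_ge0 ?sumr_ge0 // => [|tau _]; last exact: sqr_ge0.
apply: le_trans (ler_sum _ (fun t _ => conv_le t)) _.
have sqr_normH : \sum_(tau <- sH) `|H tau| ^+ 2 = \sum_(tau <- sH) H tau ^+ 2.
  by apply: eq_bigr => tau _; rewrite real_normK ?num_real.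
by rewrite -sqr_normH; apply: schur_test_seq.
Qed.

Lemma norm2_prod_shift_le (I : finType) (A : {set I}) (f : int -> R) (tau : I -> int) :
  (0 < #|A|)%N -> fin_supp f ->
  norm2 (fun t => \prod_(i in A) f (t - tau i)) <= lpnorm (2 * #|A|)%:R f ^+ #|A|.
Proof.
move=> A_gt0 ff; have [i0 i0A] := card_gt0P A_gt0.
have /fin_suppP[r ur prod_r] := fin_supp_prod_shift tau i0A ff.
set k := #|A|; pose g u := f u ^+ (2 * k).
have g_ge0 u : 0 <= g u by rewrite /g exprM exprn_ge0 ?sqr_ge0.
have fg : fin_supp g.
  move: ff => /fin_suppP[s us fs]; apply/fin_suppP; exists s => // u.
  by rewrite expf_eq0 muln_gt0 A_gt0 => /fs.
rewrite (norm2_seqE ur prod_r) lpnorm_natXE // ler_sqrt ?fsum_ge0 //.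
apply: (@le_trans _ _ (\sum_(t <- r) (\sum_(i in A) g (t - tau i)) / k%:R)).
  apply: ler_sum => t _; rewrite -prodrXl.
  apply: le_trans (prod_le_mean_powr _ (fun i => sqr_ge0 (f (t - tau i)))) _ => //.
  by under eq_bigr do rewrite -exprM.
rewrite -mulr_suml exchange_big /= ler_pdivrMr ?ltr0n // mulr_natr -sumr_const.
apply: ler_sum => i _.
rewrite -(big_map (fun t => t - tau i) xpredT g) ler_sum_fsum // map_inj_uniq //.
exact: addIr.
Qed.

End Convolution.

Section VolterraDifference.
Variables (R : realType) (x eps : int -> R).
Hypotheses (fx : fin_supp x) (feps : fin_supp eps).

Definition mix (n : nat) (S : {set 'I_n}) (i : 'I_n) : int -> R := if i \in S then x else eps.

Lemma fin_supp_mix n (S : {set 'I_n}) i : fin_supp (mix S i).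
Proof. by rewrite /mix; case: ifP. Qed.

Lemma exists_mix_eps n (S : {set 'I_n}) : S != [set: 'I_n] -> exists i, mix S i = eps.
Proof.
move=> S_neqT; have [i _ iS] : exists2 i, i \in [set: 'I_n] & i \notin S.
  by apply/subsetPn; rewrite finset.subTset.
by exists i; rewrite /mix (negbTE iS).
Qed.

Lemma prod_mix n (S : {set 'I_n}) (F : (int -> R) -> R) :
  \prod_(i < n) F (mix S i) = F x ^+ #|S| * F eps ^+ (n - #|S|).
Proof.
rewrite (bigID (mem S)) /= cardsC_ord -!prodr_const.
by congr (_ * _); apply: eq_big => i; rewrite ?inE // /mix; [move=> -> | move/negPf->].
Qed.

Lemma fin_supp_convn_mix n (H : Zn n -> R) (S : {set 'I_n}) :
  fin_supp H -> S != [set: 'I_n] -> fin_supp (convn H (mix S)).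
Proof.
by move=> fH /exists_mix_eps[i0 mix_i0]; apply: (fin_supp_convn (i0 := i0)); rewrite ?mix_i0.
Qed.

Lemma norm2_shifted_prod_mix_le n (S : {set 'I_n}) (tau : Zn n) : S != [set: 'I_n] ->
  norm2 (shifted_prod (mix S) tau) <=
  lpnorm (2 * #|S|)%:R x ^+ #|S| * lpnorm (2 * (n - #|S|))%:R eps ^+ (n - #|S|).
Proof.
rewrite neq_setTEcard card_ord -subn_gt0 cardsC_ord => /card_gt0P[i1 i1S].
have -> : shifted_prod (mix S) tau =
    (fun t => (\prod_(i in S) x (t - tau i)) * \prod_(i in ~: S) eps (t - tau i)).
  apply: funext => t; rewrite /shifted_prod (bigID (mem S)) /=.
  by congr (_ * _); apply: eq_big => i; rewrite ?inE // /mix; [move=> -> | move/negPf->].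
have [/cards0_eq S0|/card_gt0P[i0 i0S]] := posnP #|S|.
  subst S; rewrite cards0 expr0 mul1r; under eq_fun do rewrite big_set0 mul1r.
  by apply: (norm2_prod_shift_le tau _ feps); apply/card_gt0P; exists i1.
apply: le_trans (norm2M_le (fin_supp_prod_shift tau i0S fx) (fin_supp_prod_shift tau i1S feps)) _.
apply: ler_pM; rewrite ?norm2_ge0 //.
  by apply: (norm2_prod_shift_le tau _ fx); apply/card_gt0P; exists i0.
by apply: (norm2_prod_shift_le tau _ feps); apply/card_gt0P; exists i1.
Qed.

Lemma convpow_add_subE n (H : Zn n -> R) : fin_supp H ->
  (fun t => convpow H (x \+ eps) t - convpow H x t) =
  (fun t => \sum_(S : {set 'I_n} | S != [set: 'I_n]) convn H (mix S) t).
Proof.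
move=> /fin_suppP[sH usH HsH]; apply: funext => t.
rewrite /convpow !(convn_seqE _ t usH HsH).
under [in RHS]eq_bigr => S _ do rewrite (convn_seqE _ t usH HsH).
have expand tau : shifted_prod (fun=> x \+ eps) tau t =
    \sum_(S : {set 'I_n}) shifted_prod (mix S) tau t.
  rewrite /shifted_prod /= bigA_distr; apply: eq_bigr => S _; apply: eq_bigr => i _.
  by rewrite /mix; case: (i \in S).
rewrite (eq_bigr (fun tau => \sum_S H tau * shifted_prod (mix S) tau t)); last first.
  by move=> tau _; rewrite -mulr_sumr -expand.
rewrite exchange_big (bigD1 [set: 'I_n]) //= addrAC.
have -> : \sum_(tau <- sH) H tau * shifted_prod (mix [set: 'I_n]) tau t =
    \sum_(tau <- sH) H tau * shifted_prod (fun=> x) tau t.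
  by apply: eq_bigr => tau _; congr (_ * _); apply: eq_bigr => i _; rewrite /mix finset.in_setT.
by rewrite subrr add0r.
Qed.

Lemma fin_supp_convpow_add_sub n (H : Zn n -> R) : fin_supp H ->
  fin_supp (fun t => convpow H (x \+ eps) t - convpow H x t).
Proof.
by move=> fH; rewrite (convpow_add_subE fH); apply: fin_supp_sum => S; apply: fin_supp_convn_mix.
Qed.

Lemma norm2_convpow_add_sub_le_term1 n (H : Zn n -> R) : fin_supp H ->
  norm2 (fun t => convpow H (x \+ eps) t - convpow H x t) <=
  lpnorm 2 H * \sum_(k < n) term1 n k x eps.
Proof.
move=> fH; rewrite (convpow_add_subE fH) lpnorm2E.
apply: le_trans (norm2_sum _ (fun S => fin_supp_convn_mix fH)) _.
apply: (@le_trans _ _ (\sum_(S : {set 'I_n} | S != [set: 'I_n])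
    norm2 H * (lpnorm 1 x ^+ #|S| * lpnorm 1 eps ^+ (n - #|S|)))).
  apply: ler_sum => S /exists_mix_eps[i0 _]; rewrite -(prod_mix S (lpnorm 1)).
  apply: norm2_convn_le_norm2_kernel => //; last exact: fin_supp_mix.
  exact: leq_ltn_trans (ltn_ord i0).
rewrite -mulr_sumr (sum_proper_subsets_card n (fun k => lpnorm 1 x ^+ k * lpnorm 1 eps ^+ (n - k))).
rewrite ler_wpM2l ?norm2_ge0 //; apply: ler_sum => k _.
by rewrite /term1 bin_mul_exp_le ?exprn_ge0 ?lpnorm_ge0.
Qed.

Lemma norm2_convpow_add_sub_le_term2 n (H : Zn n -> R) : fin_supp H ->
  norm2 (fun t => convpow H (x \+ eps) t - convpow H x t) <=
  lpnorm 1 H * \sum_(k < n) term2 n k x eps.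
Proof.
move=> fH; rewrite (convpow_add_subE fH).
apply: le_trans (norm2_sum _ (fun S => fin_supp_convn_mix fH)) _.
apply: (@le_trans _ _ (\sum_(S : {set 'I_n} | S != [set: 'I_n]) lpnorm 1 H *
    (lpnorm (2 * #|S|)%:R x ^+ #|S| * lpnorm (2 * (n - #|S|))%:R eps ^+ (n - #|S|)))).
  apply: ler_sum => S S_neqT; have [i0 mix_i0] := exists_mix_eps S_neqT.
  apply: (norm2_convn_le_norm1_kernel (i0 := i0)) => // [|tau]; first by rewrite mix_i0.
  exact: norm2_shifted_prod_mix_le.
rewrite -mulr_sumr (sum_proper_subsets_card n (fun k =>
  lpnorm (2 * k)%:R x ^+ k * lpnorm (2 * (n - k))%:R eps ^+ (n - k))).
rewrite ler_wpM2l ?lpnorm_ge0 //; apply: ler_sum => k _.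
by rewrite /term2 bin_mul_exp_le ?exprn_ge0 ?lpnorm_ge0.
Qed.

End VolterraDifference.

Theorem theorem19 (R : realType) (N : nat) (H : forall n : nat, Zn n -> R)
  (x eps : int -> R) :
  (forall n : nat, (n <= N)%N -> fin_supp (H n)) ->
  fin_supp x -> fin_supp eps ->
  lpnorm 2 (fun t => volterra N H (x \+ eps) t - volterra N H x t)
  <= Num.min (bound1 N H x eps) (bound2 N H x eps).
Proof.
move=> fH fx feps.
have fHn (n : 'I_N.+1) : fin_supp (H n) by apply: fH; rewrite -ltnS.
have -> : (fun t => volterra N H (x \+ eps) t - volterra N H x t) =
    (fun t => \sum_(n < N.+1) (convpow (H n) (x \+ eps) t - convpow (H n) x t)).
  by apply: funext => t; rewrite /volterra sumrB.
have le_sum := norm2_sum (P := xpredT) _ (fun n _ => fin_supp_convpow_add_sub x feps (fHn n)).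
rewrite lpnorm2E le_min /bound1 /bound2; apply/andP; split;
  apply: le_trans (le_sum _) _; apply: ler_sum => n _.
- exact: norm2_convpow_add_sub_le_term1.
- exact: norm2_convpow_add_sub_le_term2.
Qed.
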